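(* Let $T=\{0,\dots,N\}$ and $\mathbb{F}$ a field. Let $C_\bullet$, $C'_\bullet$ be filtrations of finite-dimensional chain complexes $C$, $C'$ over $\mathbb{F}$ with filtration compatible ordered bases $\mathfrak{C}=(c_1,\dots,c_n)$, $\mathfrak{C}'=(c'_1,\dots,c'_n)$ and filtration boundary matrices $D$, $D'$. Let $\varphi_\bullet\colon C_\bullet\to C'_\bullet$ be an injective morphism of filtrations of chain complexes with $\varphi=\varphi_N$ an isomorphism, $F$ its matrix with respect to $\mathfrak{C},\mathfrak{C}'$, and $D^{\varphi}=DF^{-1}=F^{-1}D'$. Let $V$, $V^{\varphi}$ be invertible upper-triangular matrices such that $R=DV$ and $R^{\varphi}=D^{\varphi}V^{\varphi}$ are reduced; interpret columns of $R,V,R^{\varphi}$ as coordinate vectors with respect to $\mathfrak{C}$ (elements of $C$) and columns of $FR^{\varphi}$ and $FV$ as coordinate vectors with respect to $\mathfrak{C}'$ (elements of $C'$). Then the family \[ \mathfrak{Z}=\operatorname{cols}FR^{\varphi}\cup\{Fv_j\mid r_j=0 \text{ and } j\notin\operatorname{pivs}R^{\varphi}\} \] is a filtration compatible basis for the filtration $\varphi_\bullet(Z_*(C_\bullet))$, $t\mapsto\varphi_t(\ker\partial|_{C_t})$, and for all $z\in\mathfrak{Z}$, \[ \operatorname{supp}_{\varphi_\bullet(Z_*(C_\bullet))}(z)=\operatorname{supp}_{C_\bullet}(F^{-1}z). \]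
   Context: A chain complex is a finite-dimensional graded vector space with differential $\partial$ of degree $-1$, $\partial^2=0$; a filtration of chain complexes is a chain of subcomplexes $C_0\subseteq\dots\subseteq C_N=C$. Support: $\operatorname{supp}_{M_\bullet}(m)=\{t\mid m\in M_t\}$. A basis $\mathfrak{M}$ of $M_N$ is filtration compatible if $\mathfrak{M}\cap M_t$ is a basis of $M_t$ for all $t$; an ordered such basis is a filtration compatible ordered basis if $m\le m'$ implies $\operatorname{supp}(m')\subseteq\operatorname{supp}(m)$. The filtration boundary matrix is the matrix of $\partial$ in that basis. For a matrix $X$, $x_j$ is its $j$-th column, $\operatorname{cols}X$ the family of its nonzero columns; $\operatorname{piv}x_j$ is the largest row index of a nonzero entry of a nonzero column; $\operatorname{pivs}X$ is the set of all pivots of nonzero columns; $X$ is reduced if no two nonzero columns have the same pivot. *)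

From HB Require Import structures.
From mathcomp Require Import all_boot all_order all_algebra.
Set Implicit Arguments. Unset Strict Implicit. Unset Printing Implicit Defensive.
Import GRing.Theory.
Local Open Scope ring_scope.

(* Vectors of C are coordinate column vectors 'cV[K]_n w.r.t. the fixed
   ordered basis; the i-th basis vector is [evec i]. *)
Definition evec (K : fieldType) (n : nat) (i : 'I_n) : 'cV[K]_n := delta_mx i 0.

Definition piv (K : fieldType) (n : nat) (x : 'cV[K]_n) : nat :=
  \max_(i < n | x i 0 != 0) (i : nat).

Definition pivs (K : fieldType) (m n : nat) (X : 'M[K]_(m, n)) : pred nat :=
  fun i => [exists j : 'I_n, (col j X != 0) && (piv (col j X) == i)].

Definition reduced (K : fieldType) (m n : nat) (X : 'M[K]_(m, n)) : Prop :=
  forall j1 j2 : 'I_n, j1 != j2 -> col j1 X != 0 -> col j2 X != 0 ->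
    piv (col j1 X) != piv (col j2 X).

Definition upper_trig (K : fieldType) (n : nat) (V : 'M[K]_n) : Prop :=
  forall i j : 'I_n, (j < i)%N -> V i j = 0.

Definition filtration (K : fieldType) (n N : nat) (D : 'M[K]_n)
  (Ct : 'I_N.+1 -> {vspace 'cV[K]_n}) : Prop :=
  [/\ forall s t : 'I_N.+1, (s <= t)%N -> (Ct s <= Ct t)%VS,
      Ct ord_max = fullv &
      forall (t : 'I_N.+1) (x : 'cV[K]_n), x \in Ct t -> D *m x \in Ct t].

(* The standard (ordered) basis is a filtration compatible ordered basis:
   for each t, the basis vectors lying in C_t form a basis of C_t, and
   i <= j implies supp(c_j) \subseteq supp(c_i). *)
Definition fc_ordered_std_basis (K : fieldType) (n N : nat)
  (Ct : 'I_N.+1 -> {vspace 'cV[K]_n}) : Prop :=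
  (forall t : 'I_N.+1,
     basis_of (Ct t) [seq evec K i | i <- enum 'I_n & evec K i \in Ct t])
  /\ (forall i j : 'I_n, (i <= j)%N ->
        forall t : 'I_N.+1, evec K j \in Ct t -> evec K i \in Ct t).

Definition phiZ (K : fieldType) (n N : nat) (D F : 'M[K]_n)
  (Ct : 'I_N.+1 -> {vspace 'cV[K]_n}) (t : 'I_N.+1) : {vspace 'cV[K]_n} :=
  (linfun (mulmx F) @: (Ct t :&: lker (linfun (mulmx D))))%VS.

From HB Require Import structures.
From mathcomp Require Import all_boot all_order all_algebra.
Import GRing.Theory.
Local Open Scope ring_scope.

(* Since phi is injective, it maps the cycles Z_t = C_t ∩ ker ∂ isomorphically
   onto phi_t(Z_t), so everything can be pulled back to C: the columns of R^phi
   (cycles, as D R^phi = D D F^-1 V^phi = 0) together with the v_j such that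
   r_j = 0 and j is not a pivot of R^phi must restrict to a basis of each Z_t.
   These vectors have pairwise distinct pivots, hence are independent, and every
   nonzero cycle x shares its pivot m with one of them: if m is not a pivot of
   R^phi, write x = V y; triangularity of V gives y_m <> 0, while R y = D x = 0
   and R reduced force y_j = 0 whenever r_j <> 0, so r_m = 0.  As the standard
   basis is filtration compatible, membership in C_t only depends on the pivot,
   so eliminating pivots one at a time stays inside Z_t. *)

Set Implicit Arguments.
Unset Strict Implicit.
Unset Printing Implicit Defensive.

Lemma col_mulmx (K : fieldType) (m n p : nat) (A : 'M[K]_(m, n)) (B : 'M[K]_(n, p)) j :
  col j (A *m B) = A *m col j B.
Proof. by rewrite !colE mulmxA. Qed.

Lemma mulmx_col_sum (K : fieldType) (m n : nat) (A : 'M[K]_(m, n)) (y : 'cV[K]_n) :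
  A *m y = \sum_j y j 0 *: col j A.
Proof.
apply/matrixP => a b; rewrite (ord1 b) !mxE summxE; apply: eq_bigr => j _.
by rewrite !mxE mulrC.
Qed.

Lemma mulmx_unit_eq0 (K : fieldType) (n : nat) (F : 'M[K]_n) (y : 'cV[K]_n) :
  F \in unitmx -> (F *m y == 0) = (y == 0).
Proof.
move=> F_unit; apply/eqP/eqP => [Fy0|->]; last exact: mulmx0.
by rewrite -(mulKmx F_unit y) Fy0 mulmx0.
Qed.

Lemma lker_mulmx_unit (K : fieldType) (n : nat) (F : 'M[K]_n) :
  F \in unitmx -> lker (linfun (mulmx F) : 'End('cV[K]_n)) == 0%VS.
Proof.
move=> F_unit; apply/lker0P => x y; rewrite !lfunE /=.
exact: (can_inj (mulKmx F_unit)).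
Qed.

Lemma mem_limg_lker0 (K : fieldType) (aT rT : vectType K) (f : 'Hom(aT, rT))
    (U : {vspace aT}) (v : aT) :
  lker f == 0%VS -> (f v \in (f @: U)%VS) = (v \in U).
Proof.
move=> /lker0P f_inj; apply/idP/idP => [|vU]; last exact: memv_img.
by case/memv_imgP => u uU /f_inj ->.
Qed.

Section Pivots.
Variables (K : fieldType) (n : nat).
Implicit Types x y : 'cV[K]_n.

Lemma leq_piv x (i : 'I_n) : x i 0 != 0 -> (i <= piv x)%N.
Proof. by move=> xi; rewrite /piv (leq_bigmax_cond i). Qed.

Lemma coef_gt_piv x (k : 'I_n) : (piv x < k)%N -> x k 0 = 0.
Proof.
by move=> lt_xk; apply/eqP; apply: contraTT lt_xk => /leq_piv; rewrite -leqNgt.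
Qed.

Lemma coef_piv_neq0 x : x != 0 -> exists2 i : 'I_n, (i : nat) = piv x & x i 0 != 0.
Proof.
move=> x_neq0; have [i xi] : exists i : 'I_n, x i 0 != 0.
  apply/existsP; apply: contraNT x_neq0 => /existsPn x0; apply/eqP/matrixP => a b.
  by rewrite (ord1 b) mxE; apply/eqP; have := x0 a; rewrite negbK.
rewrite /piv.
have [|j xj ->] := @eq_bigmax_cond _ [pred j : 'I_n | x j 0 != 0] (fun j => j : nat).
  by apply/card_gt0P; exists i.
by exists j.
Qed.

Lemma piv_eq x (p : 'I_n) :
  x p 0 != 0 -> (forall k : 'I_n, (p < k)%N -> x k 0 = 0) -> piv x = p.
Proof.
move=> xp x_gt; apply/eqP; rewrite eqn_leq leq_piv // andbT.
by apply/bigmax_leqP => k xk; rewrite leqNgt; apply: contra xk => /x_gt ->.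
Qed.

Lemma sum_distinct_piv_eq0 (I : finType) (P : pred I) (u : I -> 'cV[K]_n)
    (c : I -> K) :
  (forall i, P i -> u i != 0) -> {in P &, injective (fun i => piv (u i))} ->
  \sum_(i | P i) c i *: u i = 0 -> forall i, P i -> c i = 0.
Proof.
move=> u_neq0 piv_inj /eqP sum0 i1 P1; apply/eqP; apply: contraTT sum0 => c1.
have [i0 /andP[P0 c0] maxi0] := @arg_maxnP I i1 (fun i => P i && (c i != 0))
  (fun i => piv (u i)) (introT andP (conj P1 c1)).
have [p p_piv up] := coef_piv_neq0 (u_neq0 _ P0).
apply/negP => /eqP /matrixP /(_ p 0) /eqP; apply/negP.
rewrite summxE (bigD1 i0) //= big1 ?addr0 => [|i /andP[Pi ne_i]]; rewrite !mxE.
  by rewrite mulf_neq0.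
have [->|ci] := eqVneq (c i) 0; first by rewrite mul0r.
have le_i0 : (piv (u i) <= piv (u i0))%N by apply: maxi0; rewrite Pi.
rewrite coef_gt_piv ?mulr0 // p_piv ltn_neqAle le_i0 andbT.
by apply: contraNneq ne_i => /eqP; rewrite eq_sym => /eqP /piv_inj ->.
Qed.

Lemma free_distinct_piv (s : seq 'cV[K]_n) :
  0 \notin s -> uniq (map (@piv K n) s) -> free s.
Proof.
move=> s_neq0 /(uniqP 0%N) piv_inj; apply/(@freeP _ _ _ (in_tuple s)) => c sum0 i.
apply: (sum_distinct_piv_eq0 _ _ sum0) => // [{}i _|i' j _ _ eq_ij].
  by apply: contraNneq s_neq0 => <-; apply: mem_nth.
apply/val_inj/piv_inj; rewrite ?inE ?size_map ?ltn_ord //.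
by rewrite !(nth_map 0) ?ltn_ord.
Qed.

Lemma piv_basis_of (W : {vspace 'cV[K]_n}) (s : seq 'cV[K]_n) :
  {subset s <= W} -> 0 \notin s -> uniq (map (@piv K n) s) ->
  (forall x, x \in W -> x != 0 -> exists2 u, u \in s & piv u = piv x) ->
  basis_of W s.
Proof.
move=> sW s_neq0 piv_uniq piv_cover.
rewrite /basis_of free_distinct_piv // andbT eqEsubv; apply/andP; split.
  exact/span_subvP.
suff span_below m x : x \in W -> (forall k : 'I_n, (m <= k)%N -> x k 0 = 0) ->
    x \in <<s>>%VS.
  by apply/subvP => x xW; apply: (span_below n) => // k; rewrite leqNgt ltn_ord.
elim: m x => [|m IHm] x xW x_ge.
  suff -> : x = 0 by apply: mem0v.
  by apply/matrixP => a b; rewrite (ord1 b) mxE x_ge.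
have [-> | x_neq0] := eqVneq x 0; first exact: mem0v.
have [i i_piv xi] := coef_piv_neq0 x_neq0.
have [u us u_piv] := piv_cover x xW x_neq0.
have u_neq0 : u != 0 by apply: contraNneq s_neq0 => <-.
have ui : u i 0 != 0.
  have [j j_piv uj] := coef_piv_neq0 u_neq0.
  by have -> : i = j by apply: val_inj; rewrite /= i_piv -u_piv -j_piv.
have i_le_m : (i <= m)%N by rewrite leqNgt; apply: contra xi => /x_ge ->.
rewrite -[x](subrK ((x i 0 / u i 0) *: u)).
apply: memvD; last exact/memvZ/memv_span.
apply: IHm => [|k le_mk]; first by apply/memvB/memvZ/sW.
have [-> | ne_ki] := eqVneq k i; first by rewrite !mxE divfK ?subrr.
have lt_xk : (piv x < k)%N.
  by rewrite -i_piv ltn_neqAle (leq_trans i_le_m le_mk) andbT eq_sym.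
by rewrite !mxE (coef_gt_piv lt_xk) (@coef_gt_piv u k) ?u_piv // mulr0 subrr.
Qed.

End Pivots.

Lemma reduced_piv_inj (K : fieldType) (m n : nat) (X : 'M[K]_(m, n)) :
  reduced X -> {in [pred j | col j X != 0] &, injective (fun j => piv (col j X))}.
Proof.
move=> redX j1 j2 Xj1 Xj2 eq_piv; apply/eqP; apply: contraT => ne_j.
by have := redX _ _ ne_j Xj1 Xj2; rewrite eq_piv eqxx.
Qed.

Lemma reduced_mul_eq0 (K : fieldType) (m n : nat) (X : 'M[K]_(m, n)) (y : 'cV[K]_n) j :
  reduced X -> X *m y = 0 -> col j X != 0 -> y j 0 = 0.
Proof.
move=> redX; rewrite mulmx_col_sum (bigID [pred j | col j X != 0]) /=.
rewrite [X in _ + X]big1 ?addr0 => [Xy0|i /negbNE/eqP ->]; last exact: scaler0.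
by apply: (sum_distinct_piv_eq0 _ (reduced_piv_inj redX) Xy0).
Qed.

Section UpperTriangular.
Variables (K : fieldType) (n : nat) (V : 'M[K]_n).
Hypotheses (V_unit : V \in unitmx) (V_trig : upper_trig V).

Lemma upper_trig_diag_neq0 j : V j j != 0.
Proof.
have V_trig_mx : is_trig_mx V^T by apply/is_trig_mxP => a b ab; rewrite mxE V_trig.
move: V_unit; rewrite -unitmx_tr unitmxE unitfE det_trig // prodf_seq_neq0.
by move=> /allP /(_ j (mem_index_enum _)); rewrite mxE.
Qed.

Lemma piv_col_upper_trig j : piv (col j V) = j.
Proof.
apply: piv_eq => [|k lt_jk]; rewrite mxE ?upper_trig_diag_neq0 //.
exact: V_trig.
Qed.

Lemma col_upper_trig_neq0 j : col j V != 0.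
Proof.
by apply: contra_neq (upper_trig_diag_neq0 j) => /matrixP /(_ j 0); rewrite !mxE.
Qed.

Lemma piv_mul_upper_trig (y : 'cV[K]_n) : y != 0 -> piv (V *m y) = piv y.
Proof.
move=> y_neq0; have [i i_piv yi] := coef_piv_neq0 y_neq0.
have term0 (a j : 'I_n) : (i < a)%N || (j != i) -> (i <= a)%N -> V a j * y j 0 = 0.
  move=> ai ia; have [lt_ja | le_aj] := ltnP j a; first by rewrite V_trig ?mul0r.
  rewrite coef_gt_piv ?mulr0 // -i_piv.
  case/orP: ai => [lt_ia | ne_ji]; first exact: leq_trans lt_ia le_aj.
  by rewrite ltn_neqAle (leq_trans ia le_aj) andbT eq_sym.
rewrite -i_piv; apply: piv_eq => [|k lt_ik].
  rewrite mxE (bigD1 i) //= big1 ?addr0 => [|j ne_ji].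
    by rewrite mulf_neq0 ?upper_trig_diag_neq0.
  by rewrite term0 ?ne_ji ?orbT.
by rewrite mxE big1 // => j _; rewrite term0 ?lt_ik // ltnW.
Qed.

End UpperTriangular.

Section FiltrationCompatibleBasis.
Variables (K : fieldType) (n N : nat) (Ct : 'I_N.+1 -> {vspace 'cV[K]_n}).
Hypothesis fcC : fc_ordered_std_basis Ct.

Lemma evec_mem_filtration t (x : 'cV[K]_n) (i : 'I_n) :
  x \in Ct t -> x i 0 != 0 -> evec K i \in Ct t.
Proof.
case: fcC => C_basis _ xC; apply: contraTT => i_notC.
set X := [seq evec K i | i <- enum 'I_n & evec K i \in Ct t].
have : x \in <<in_tuple X>>%VS by rewrite (span_basis (C_basis t)).
move/coord_span => ->; rewrite summxE big1 ?eqxx // => k _; rewrite mxE.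
have /mapP[j] : X`_k \in X by apply: mem_nth.
rewrite mem_filter => /andP[jC _] ->; rewrite /evec mxE.
by case: eqVneq => [eq_ij | _]; [move: i_notC; rewrite eq_ij jC | rewrite mulr0].
Qed.

Lemma mem_filtration_piv_le t (x y : 'cV[K]_n) :
  x \in Ct t -> x != 0 -> (piv y <= piv x)%N -> y \in Ct t.
Proof.
move=> xC x_neq0 le_yx; have [p p_piv xp] := coef_piv_neq0 x_neq0.
have evec_p := evec_mem_filtration xC xp.
rewrite (matrix_sum_delta y); apply: memv_suml => i _; rewrite big_ord1.
have [-> | yi] := eqVneq (y i 0) 0; first by rewrite scale0r mem0v.
apply: memvZ; case: fcC => _ /(_ i p); apply => //.
by rewrite p_piv (leq_trans (leq_piv yi)).
Qed.

End FiltrationCompatibleBasis.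

Definition cycles (K : fieldType) (n N : nat) (D : 'M[K]_n)
    (Ct : 'I_N.+1 -> {vspace 'cV[K]_n}) (t : 'I_N.+1) : {vspace 'cV[K]_n} :=
  (Ct t :&: lker (linfun (mulmx D)))%VS.

Lemma mem_cycles (K : fieldType) (n N : nat) (D : 'M[K]_n)
    (Ct : 'I_N.+1 -> {vspace 'cV[K]_n}) t (x : 'cV[K]_n) :
  (x \in cycles D Ct t) = (x \in Ct t) && (D *m x == 0).
Proof. by rewrite memv_cap memv_ker lfunE. Qed.

Section CycleBasis.
Variables (K : fieldType) (n N : nat) (D P V : 'M[K]_n).
Variable Ct : 'I_N.+1 -> {vspace 'cV[K]_n}.
Hypotheses (fcC : fc_ordered_std_basis Ct) (DP0 : D *m P = 0).
Hypotheses (V_unit : V \in unitmx) (V_trig : upper_trig V).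
Hypotheses (redR : reduced (D *m V)) (redP : reduced P).

(* The paper's family 𝔷, pulled back along phi. *)
Definition zfam (k : 'I_n + 'I_n) : 'cV[K]_n :=
  match k with inl j => col j P | inr j => col j V end.

Definition zfam_dom : pred ('I_n + 'I_n) := fun k =>
  match k with
  | inl j => col j P != 0
  | inr j => (col j (D *m V) == 0) && ~~ pivs P j
  end.

Lemma D_zfam k : zfam_dom k -> D *m zfam k = 0.
Proof.
case: k => j /=; last by case/andP => /eqP; rewrite col_mulmx.
by rewrite -col_mulmx DP0 => _; apply/matrixP => a b; rewrite !mxE.
Qed.

Lemma zfam_neq0 k : zfam_dom k -> zfam k != 0.
Proof. by case: k => j //= _; apply: col_upper_trig_neq0. Qed.

Lemma piv_zfam_inj : {in zfam_dom &, injective (fun k => piv (zfam k))}.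
Proof.
have pivs_col j : col j P != 0 -> pivs P (piv (col j P)).
  by move=> Pj; apply/existsP; exists j; rewrite Pj eqxx.
move=> [j1|j1] [j2|j2]; rewrite !unfold_in /= ?(piv_col_upper_trig V_unit V_trig).
- by move=> Pj1 Pj2 /(reduced_piv_inj redP Pj1 Pj2) ->.
- by move=> /pivs_col Pj1 /andP[_] + eq_piv; rewrite -eq_piv Pj1.
- by move=> /andP[_] + /pivs_col Pj2 eq_piv; rewrite eq_piv Pj2.
- by move=> _ _ /val_inj ->.
Qed.

Lemma cycle_piv_col_eq0 (x : 'cV[K]_n) (m : 'I_n) :
  x != 0 -> D *m x = 0 -> piv x = m -> col m (D *m V) = 0.
Proof.
move=> x_neq0 Dx0 x_piv; set y := invmx V *m x.
have xE : x = V *m y by rewrite mulKVmx.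
have y_neq0 : y != 0 by apply: contra_neq x_neq0; rewrite xE => ->; rewrite mulmx0.
have ym : y m 0 != 0.
  have [i i_piv yi] := coef_piv_neq0 y_neq0.
  suff -> : m = i by [].
  by apply: val_inj; rewrite /= i_piv -x_piv xE piv_mul_upper_trig.
apply/eqP; apply: contraNT ym => Rm; apply/eqP.
by apply: (reduced_mul_eq0 redR) Rm; rewrite -mulmxA -xE.
Qed.

Lemma zfam_piv_cover t (x : 'cV[K]_n) :
  x \in cycles D Ct t -> x != 0 ->
  exists2 k, zfam_dom k && (zfam k \in cycles D Ct t) & piv (zfam k) = piv x.
Proof.
rewrite mem_cycles => /andP[xC /eqP Dx0] x_neq0.
suff [k dom_k piv_k] : exists2 k, zfam_dom k & piv (zfam k) = piv x.
  exists k => //; rewrite dom_k mem_cycles D_zfam // eqxx andbT.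
  by rewrite (mem_filtration_piv_le fcC xC x_neq0) ?piv_k.
have [m m_piv _] := coef_piv_neq0 x_neq0.
have [/existsP[j /andP[Pj /eqP j_piv]] | m_notin] := boolP (pivs P m).
  by exists (inl j); rewrite //= j_piv.
exists (inr m); last by rewrite /= piv_col_upper_trig.
by rewrite /= m_notin (cycle_piv_col_eq0 x_neq0 Dx0 (esym m_piv)) eqxx.
Qed.

Lemma zfam_basis_of t :
  basis_of (cycles D Ct t)
    [seq zfam k | k <- enum {: 'I_n + 'I_n} & zfam_dom k && (zfam k \in cycles D Ct t)].
Proof.
apply: piv_basis_of.
- by move=> y /mapP[k]; rewrite mem_filter => /andP[/andP[_ kZ] _] ->.
- apply/negP => /mapP[k]; rewrite mem_filter => /andP[/andP[/zfam_neq0 + _] _].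
  by move=> /[swap] <-; rewrite eqxx.
- rewrite -map_comp (map_inj_in_uniq (f := fun k => piv (zfam k))).
    by rewrite filter_uniq ?enum_uniq.
  move=> k1 k2; rewrite !mem_filter => /andP[/andP[dom_k1 _] _] /andP[/andP[dom_k2 _] _].
  exact: piv_zfam_inj.
- move=> x xZ x_neq0; have [k /andP[dom_k kZ] piv_k] := zfam_piv_cover xZ x_neq0.
  by exists (zfam k) => //; apply: map_f; rewrite mem_filter dom_k kZ mem_enum.
Qed.

End CycleBasis.

Unset Implicit Arguments.

Theorem lemma3p8 (K : fieldType) (N n : nat)
  (D D' : 'M[K]_n)
  (Ct Ct' : 'I_N.+1 -> {vspace 'cV[K]_n})
  (F V Vphi : 'M[K]_n) :
  D *m D = 0 -> D' *m D' = 0 ->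
  filtration D Ct -> filtration D' Ct' ->
  fc_ordered_std_basis Ct -> fc_ordered_std_basis Ct' ->
  (* phi = F *m _ is a chain map, a morphism of filtrations, and an isomorphism *)
  F *m D = D' *m F ->
  (forall (t : 'I_N.+1) (x : 'cV[K]_n), x \in Ct t -> F *m x \in Ct' t) ->
  F \in unitmx ->
  V \in unitmx -> upper_trig V ->
  Vphi \in unitmx -> upper_trig Vphi ->
  let Dphi := D *m invmx F in
  let R := D *m V in
  let Rphi := Dphi *m Vphi in
  reduced R -> reduced Rphi ->
  let z : 'I_n + 'I_n -> 'cV[K]_n :=
    fun k => match k with
             | inl j => col j (F *m Rphi)
             | inr j => F *m col j V
             end in
  let inZ : pred ('I_n + 'I_n) :=
    fun k => match k with
             | inl j => col j (F *m Rphi) != 0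
             | inr j => (col j R == 0) && ~~ pivs Rphi j
             end in
  (forall t : 'I_N.+1,
     basis_of (phiZ D F Ct t)
       [seq z k | k <- enum {: 'I_n + 'I_n}
                  & inZ k && (z k \in phiZ D F Ct t)])
  /\ (forall k, inZ k -> forall t : 'I_N.+1,
        (z k \in phiZ D F Ct t) = (invmx F *m z k \in Ct t)).
Proof.
move=> DD0 _ _ _ fcC _ _ _ F_unit V_unit V_trig _ _ Dphi R Rphi redR redRphi z inZ.
have DRphi0 : D *m Rphi = 0 by rewrite /Rphi /Dphi !mulmxA DD0 !mul0mx.
have F_ker0 := lker_mulmx_unit F_unit.
have zE k : z k = linfun (mulmx F) (zfam Rphi V k).
  by rewrite lfunE; case: k => j //=; rewrite col_mulmx.
have inZE k : inZ k = zfam_dom D Rphi V k.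
  by case: k => j //=; rewrite col_mulmx mulmx_unit_eq0.
have mem_phiZ t k : (z k \in phiZ D F Ct t) = (zfam Rphi V k \in cycles D Ct t).
  by rewrite zE mem_limg_lker0.
split=> [t | k + t]; last first.
  rewrite inZE => dom_k; rewrite mem_phiZ zE lfunE /= mulKmx //.
  by rewrite mem_cycles (D_zfam DRphi0 dom_k) eqxx andbT.
under eq_filter do rewrite inZE mem_phiZ.
under eq_map do rewrite zE.
rewrite (map_comp (linfun (mulmx F)) (zfam Rphi V)).
apply: limg_basis_of; first by rewrite (eqP F_ker0) capv0.
exact: zfam_basis_of fcC DRphi0 V_unit V_trig redR redRphi t.
Qed.
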